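(* Let $\Sigma=\mathbb{S}^{n-1}\times\mathbb{R}\subset\mathbb{R}^{n+1}$ be a self-shrinker, with $x_n$ the coordinate on the $\mathbb{R}$ factor. Then $C=\sqrt2$ is the unique value $C>0$ such that the two hypersurfaces $\{x_n=\pm C\}$ split $\Sigma$ into three stable regions $\{x_n>C\}$, $\{|x_n|<C\}$, $\{x_n<-C\}$.
   Context: $\mathbb{S}^{n-1}$ is the round sphere of radius $\sqrt{2(n-1)}$ centered at the origin of $\mathbb{R}^n$. Stability operator: $Lf=\Delta f-\tfrac12\langle\vec x,\nabla f\rangle+(|A|^2+\tfrac12)f$. A region $\Omega$ is stable if there exists a function $u$ with $Lu=0$ and $u>0$ on $\Omega$. *)

From Stdlib Require Import Reals Lra.
Open Scope R_scope.

(* Points of R^(n+1) are represented as functions [nat -> R]; only the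
   coordinates 0..n are meaningful (coordinates 0..n-1 are those of the
   R^n containing S^{n-1}, coordinate n is x_n, the R factor).  All notions
   below only look at coordinates < n+1 (continuity forces functions to be
   independent of the remaining ones). *)
Definition pt := nat -> R.

Fixpoint rsum (k : nat) (f : nat -> R) : R :=
  match k with O => 0 | S k' => rsum k' f + f k' end.

Definition upd (x : pt) (i : nat) (t : R) : pt :=
  fun j => if Nat.eq_dec j i then t else x j.

Definition near (N : nat) (x y : pt) (d : R) : Prop :=
  forall i, (i < N)%nat -> Rabs (y i - x i) < d.

Definition open_set (N : nat) (W : pt -> Prop) : Prop :=
  forall x, W x -> exists d, 0 < d /\ forall y, near N x y d -> W y.

Definition cont_on (N : nat) (W : pt -> Prop) (f : pt -> R) : Prop :=
  forall x, W x -> forall eps, 0 < eps ->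
    exists d, 0 < d /\ forall y, near N x y d -> Rabs (f y - f x) < eps.

Definition C2_on (N : nat) (W : pt -> Prop) (U : pt -> R)
    (D1 : nat -> pt -> R) (D2 : nat -> nat -> pt -> R) : Prop :=
  cont_on N W U /\
  (forall i, (i < N)%nat -> cont_on N W (D1 i)) /\
  (forall i j, (i < N)%nat -> (j < N)%nat -> cont_on N W (D2 i j)) /\
  (forall x i, W x -> (i < N)%nat ->
      derivable_pt_lim (fun t => U (upd x i t)) (x i) (D1 i x)) /\
  (forall x i j, W x -> (i < N)%nat -> (j < N)%nat ->
      derivable_pt_lim (fun t => D1 j (upd x i t)) (x i) (D2 i j x)).

Definition rad (n : nat) : R := sqrt (2 * (INR n - 1)).

Definition Sigma (n : nat) (x : pt) : Prop :=
  rsum n (fun i => x i ^ 2) = 2 * (INR n - 1).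

Definition nu (n : nat) (x : pt) (i : nat) : R :=
  if Nat.ltb i n then x i / rad n else 0.

(* mean curvature (w.r.t. nu) and |A|^2 of Sigma:
   n-1 principal curvatures 1/rad n and one principal curvature 0 *)
Definition Hmean (n : nat) : R := (INR n - 1) / rad n.
Definition A2 (n : nat) : R := (INR n - 1) / (rad n ^ 2).

(* Laplace-Beltrami operator of Sigma applied to (the restriction of) U,
   expressed through ambient derivatives:
   Delta_Sigma u = Delta_{R^{n+1}} U - D^2U(nu,nu) - H <DU, nu>. *)
Definition lapSigma (n : nat) (D1 : nat -> pt -> R) (D2 : nat -> nat -> pt -> R)
    (x : pt) : R :=
  rsum (S n) (fun i => D2 i i x)
  - rsum (S n) (fun i => rsum (S n) (fun j => nu n x i * nu n x j * D2 i j x))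
  - Hmean n * rsum (S n) (fun i => nu n x i * D1 i x).

(* <x, grad_Sigma u> = <x, DU> - <x, nu> <DU, nu> *)
Definition xgradSigma (n : nat) (D1 : nat -> pt -> R) (x : pt) : R :=
  rsum (S n) (fun i => x i * D1 i x)
  - rsum (S n) (fun i => x i * nu n x i) * rsum (S n) (fun i => nu n x i * D1 i x).

Definition Lop (n : nat) (U : pt -> R) (D1 : nat -> pt -> R)
    (D2 : nat -> nat -> pt -> R) (x : pt) : R :=
  lapSigma n D1 D2 x - / 2 * xgradSigma n D1 x + (A2 n + / 2) * U x.

(* A C^2 function on Omega is given as a
   C^2 function on an open neighbourhood W of Omega in R^{n+1}. *)
Definition stable (n : nat) (Omega : pt -> Prop) : Prop :=
  exists (W : pt -> Prop) (U : pt -> R) D1 D2,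
    open_set (S n) W /\ (forall x, Omega x -> W x) /\
    C2_on (S n) W U D1 D2 /\
    forall x, Omega x -> Lop n U D1 D2 x = 0 /\ 0 < U x.

Definition region_up (n : nat) (C : R) (x : pt) : Prop := Sigma n x /\ C < x n.
Definition region_mid (n : nat) (C : R) (x : pt) : Prop := Sigma n x /\ Rabs (x n) < C.
Definition region_low (n : nat) (C : R) (x : pt) : Prop := Sigma n x /\ x n < - C.

(* On functions of the height alone, [L] is the ODE operator [g'' - z g' / 2 + g]
   (because [|A|^2 = 1/2]), and [z^2 - 2] solves it while vanishing exactly at
   [|x_n| = sqrt 2]: for [C = sqrt 2], [|z^2 - 2|] is a positive Jacobi field on each region.
   Conversely, if [C < sqrt 2] the upper region contains a slab carrying the positive
   strict subsolution [(z^2 - b^2)(r^2 - z^2)], vanishing on the slab's boundary, and if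
   [C > sqrt 2] the middle region carries [a^2 - z^2].  If [u > 0] solved [L u = 0] there,
   at a maximum of [g / u] on the (compact) slab a multiple of [g] would touch [u] from
   below; at such a zero minimum of the difference, its second derivatives along the
   vertical line and along rotations in the coordinate planes of the sphere are
   nonnegative, and they add up to [L] of the difference, contradicting [L g > 0]. *)

From Coquelicot Require Import Coquelicot.
From Stdlib Require Import Reals Lra Lia Psatz Classical FunctionalExtensionality ClassicalEpsilon.
Open Scope R_scope.

Lemma INR_ge2 n : (2 <= n)%nat -> 2 <= INR n.
Proof. intros Hn. replace 2 with (INR 2) by (simpl; ring). now apply le_INR. Qed.

Lemma rsum_ext k f g : (forall i, (i < k)%nat -> f i = g i) -> rsum k f = rsum k g.
Proof.
  induction k as [|k IH]; cbn [rsum]; intros H; [reflexivity|].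
  rewrite IH by (intros; apply H; lia). rewrite H by lia; reflexivity.
Qed.

Lemma rsum_add k f g : rsum k (fun i => f i + g i) = rsum k f + rsum k g.
Proof. induction k as [|k IH]; cbn [rsum]; [ring|]. rewrite IH; ring. Qed.

Lemma rsum_scal k c f : rsum k (fun i => c * f i) = c * rsum k f.
Proof. induction k as [|k IH]; cbn [rsum]; [ring|]. rewrite IH; ring. Qed.

Lemma rsum_sub k f g : rsum k (fun i => f i - g i) = rsum k f - rsum k g.
Proof. induction k as [|k IH]; cbn [rsum]; [ring|]. rewrite IH; ring. Qed.

Lemma rsum_const k c : rsum k (fun _ => c) = INR k * c.
Proof. induction k as [|k IH]; cbn [rsum]; [simpl; ring|]. rewrite IH, S_INR; ring. Qed.

Lemma rsum_eq0 k f : (forall i, (i < k)%nat -> f i = 0) -> rsum k f = 0.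
Proof. intros H. rewrite (rsum_ext k f (fun _ => 0)) by exact H. rewrite rsum_const; ring. Qed.

Lemma rsum_swap k m (f : nat -> nat -> R) :
  rsum k (fun i => rsum m (fun j => f i j)) = rsum m (fun j => rsum k (fun i => f i j)).
Proof.
  induction k as [|k IH]; cbn [rsum].
  - symmetry; now apply rsum_eq0.
  - now rewrite IH, <- rsum_add.
Qed.

Lemma rsum_le k f g : (forall i, (i < k)%nat -> f i <= g i) -> rsum k f <= rsum k g.
Proof.
  induction k as [|k IH]; cbn [rsum]; intros H; [lra|].
  apply Rplus_le_compat; [apply IH; intros; apply H|apply H]; lia.
Qed.

Lemma rsum_ge_term k f i : (i < k)%nat ->
  (forall j, (j < k)%nat -> j <> i -> 0 <= f j) -> f i <= rsum k f.
Proof.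
  induction k as [|k IH]; cbn [rsum]; intros Hi H; [lia|].
  destruct (Nat.eq_dec i k) as [->|Hne].
  - enough (0 <= rsum k f) by lra.
    rewrite <- (rsum_eq0 k (fun _ => 0)) by reflexivity.
    apply rsum_le; intros; apply H; lia.
  - assert (f i <= rsum k f) by (apply IH; [lia|intros; apply H; lia]).
    assert (0 <= f k) by (apply H; lia). lra.
Qed.

Lemma upd_same x i t : upd x i t i = t.
Proof. unfold upd; destruct (Nat.eq_dec i i); congruence. Qed.

Lemma upd_other x i t j : j <> i -> upd x i t j = x j.
Proof. unfold upd; destruct (Nat.eq_dec j i); congruence. Qed.

Lemma upd_id x i : upd x i (x i) = x.
Proof.
  apply functional_extensionality; intro j; unfold upd.
  destruct (Nat.eq_dec j i); subst; reflexivity.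
Qed.

Lemma upd_upd x i a b : upd (upd x i a) i b = upd x i b.
Proof. apply functional_extensionality; intro j; unfold upd; now destruct (Nat.eq_dec j i). Qed.

Lemma upd_comm x i j a b : i <> j -> upd (upd x i a) j b = upd (upd x j b) i a.
Proof.
  intros; apply functional_extensionality; intro k; unfold upd.
  destruct (Nat.eq_dec k j), (Nat.eq_dec k i); subst; congruence.
Qed.

Lemma rsum_sq_upd n x i t : (i < n)%nat ->
  rsum n (fun k => upd x i t k ^ 2) = rsum n (fun k => x k ^ 2) - x i ^ 2 + t ^ 2.
Proof.
  induction n as [|n IH]; cbn [rsum]; intros Hi; [lia|].
  destruct (Nat.eq_dec i n) as [->|Hne].
  - rewrite upd_same, (rsum_ext n _ (fun k => x k ^ 2)); [ring|].
    intros j Hj; rewrite upd_other by lia; reflexivity.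
  - rewrite IH, upd_other by lia; ring.
Qed.

Lemma rsum_sq_upd_ge n x i t : (n <= i)%nat ->
  rsum n (fun k => upd x i t k ^ 2) = rsum n (fun k => x k ^ 2).
Proof. intros; apply rsum_ext; intros; rewrite upd_other by lia; reflexivity. Qed.

Lemma sq_le_rsum_sq n x i : (i < n)%nat -> x i ^ 2 <= rsum n (fun k => x k ^ 2).
Proof. intros; apply (rsum_ge_term n (fun k => x k ^ 2)); auto; intros; apply pow2_ge_0. Qed.

Definition cont_at (N : nat) (f : pt -> R) (x : pt) : Prop :=
  forall eps, 0 < eps -> exists d, 0 < d /\ forall y, near N x y d -> Rabs (f y - f x) < eps.

Lemma near_mono N x y d d' : d <= d' -> near N x y d -> near N x y d'.
Proof. intros Hd H i Hi. specialize (H i Hi). lra. Qed.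

Lemma near_upd N x i t d : 0 < d -> Rabs (t - x i) < d -> near N x (upd x i t) d.
Proof.
  intros Hd Ht j Hj. unfold upd; destruct (Nat.eq_dec j i); subst; auto.
  now rewrite Rminus_diag, Rabs_R0.
Qed.

Lemma near_upd2 N p i j u v u0 v0 d : i <> j -> 0 < d ->
  Rabs (u - u0) < d -> Rabs (v - v0) < d ->
  near N (upd (upd p i u0) j v0) (upd (upd p i u) j v) d.
Proof.
  intros Hij Hd Hu Hv k Hk. unfold upd.
  destruct (Nat.eq_dec k j), (Nat.eq_dec k i); auto.
  now rewrite Rminus_diag, Rabs_R0.
Qed.

Lemma cont_at_comp2 N f h G x : cont_at N f x -> cont_at N h x ->
  continuity_2d_pt G (f x) (h x) -> cont_at N (fun y => G (f y) (h y)) x.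
Proof.
  intros Hf Hh HG eps Heps.
  destruct (HG (mkposreal eps Heps)) as [d Hd].
  destruct (Hf d (cond_pos d)) as [d1 [Hd1 H1]].
  destruct (Hh d (cond_pos d)) as [d2 [Hd2 H2]].
  exists (Rmin d1 d2); split; [now apply Rmin_pos|].
  intros y Hy. apply (Hd (f y) (h y)).
  - apply H1; eapply near_mono; [apply Rmin_l|exact Hy].
  - apply H2; eapply near_mono; [apply Rmin_r|exact Hy].
Qed.

Lemma cont_at_comp N f G x : cont_at N f x -> continuity_pt G (f x) ->
  cont_at N (fun y => G (f y)) x.
Proof.
  intros Hf HG.
  apply (cont_at_comp2 N f f (fun u _ => G u) x Hf Hf).
  apply (continuity_1d_2d_pt_comp G (fun u _ => u)); auto.
  apply continuity_2d_pt_id1.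
Qed.

Lemma cont_at_coord N i x : (i < N)%nat -> cont_at N (fun y => y i) x.
Proof. intros Hi eps Heps; exists eps; split; auto. Qed.

Lemma cont_at_const N c x : cont_at N (fun _ => c) x.
Proof.
  intros eps Heps; exists 1; split; [lra|].
  intros; now rewrite Rminus_diag, Rabs_R0.
Qed.

Lemma cont_at_plus N f h x : cont_at N f x -> cont_at N h x -> cont_at N (fun y => f y + h y) x.
Proof.
  intros; apply (cont_at_comp2 N f h Rplus); auto.
  apply continuity_2d_pt_plus; [apply continuity_2d_pt_id1|apply continuity_2d_pt_id2].
Qed.

Lemma cont_at_minus N f h x : cont_at N f x -> cont_at N h x -> cont_at N (fun y => f y - h y) x.
Proof.
  intros; apply (cont_at_comp2 N f h Rminus); auto.
  apply continuity_2d_pt_minus; [apply continuity_2d_pt_id1|apply continuity_2d_pt_id2].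
Qed.

Lemma cont_at_div N f h x : cont_at N f x -> cont_at N h x -> h x <> 0 ->
  cont_at N (fun y => f y / h y) x.
Proof.
  intros; apply (cont_at_comp2 N f h Rdiv); auto.
  apply continuity_2d_pt_mult; [apply continuity_2d_pt_id1|].
  apply (continuity_2d_pt_inv (fun _ v => v)); auto. apply continuity_2d_pt_id2.
Qed.

Lemma cont_at_rsum_sq N n x : (n <= N)%nat -> cont_at N (fun y => rsum n (fun k => y k ^ 2)) x.
Proof.
  induction n as [|n IH]; intros Hn; cbn [rsum]; [apply cont_at_const|].
  apply cont_at_plus; [apply IH; lia|].
  apply (cont_at_comp N (fun y => y n) (fun u => u ^ 2)); [apply cont_at_coord; lia|].
  apply derivable_continuous_pt, derivable_pt_pow.
Qed.

(** * Maxima on closed bounded sets *)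

Fixpoint to_pt (N : nat) : Compactness.Tn N R -> pt :=
  match N return Compactness.Tn N R -> pt with
  | O => fun _ _ => 0
  | S N' => fun t i => match i with O => fst t | S i' => to_pt N' (snd t) i' end
  end.

Fixpoint of_pt (N : nat) : pt -> Compactness.Tn N R :=
  match N return pt -> Compactness.Tn N R with
  | O => fun _ => tt
  | S N' => fun x => (x 0%nat, of_pt N' (fun i => x (S i)))
  end.

Lemma bounded_of_pt N (A B x : pt) : (forall i, (i < N)%nat -> A i <= x i <= B i) ->
  Compactness.bounded_n N (of_pt N A) (of_pt N B) (of_pt N x).
Proof.
  revert A B x; induction N as [|N IH]; intros A B x H; simpl; auto.
  split; [apply H; lia|]. apply IH. intros i Hi; apply H; lia.
Qed.

Lemma near_of_close_n N d (x : pt) t :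
  Compactness.close_n N d (of_pt N x) t -> near N (to_pt N t) x d.
Proof.
  revert x t; induction N as [|N IH]; intros x t H i Hi; [lia|].
  destruct t as [t1 t2]; simpl in H; destruct H as [H1 H2].
  destruct i; simpl; [exact H1|]. apply (IH (fun i => x (S i)) t2 H2 i); lia.
Qed.

Lemma In_argmax {A : Type} (l : list A) (f : A -> R) a : List.In a l ->
  exists m, List.In m l /\ forall b, List.In b l -> f b <= f m.
Proof.
  revert a; induction l as [|c l IH]; intros a Ha; [destruct Ha|].
  destruct l as [|c' l'].
  - exists c; split; [now left|]. intros b [->|[]]; lra.
  - destruct (IH c' (or_introl eq_refl)) as [m [Hm Hmax]].
    destruct (Rle_dec (f c) (f m)).
    + exists m; split; [now right|]. intros b [->|Hb]; auto.
    + exists c; split; [now left|]. intros b [->|Hb]; [lra|]. specialize (Hmax b Hb); lra.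
Qed.

Lemma closed_bounded_max N (K : pt -> Prop) (phi : pt -> R) (B : R) :
  (forall x, ~ K x -> exists d, 0 < d /\ forall y, near N x y d -> ~ K y) ->
  (forall x, K x -> forall i, (i < N)%nat -> Rabs (x i) <= B) ->
  (forall x, K x -> cont_at N phi x) ->
  (exists x0, K x0) ->
  exists p, K p /\ forall q, K q -> phi q <= phi p.
Proof.
  intros Hclosed Hbound Hcont [x0 Kx0].
  apply NNPP; intro Hnomax.
  (* Otherwise every point has a box on which [phi] restricted to [K] is beaten by a
     single point of [K]; finitely many boxes cover [K], and the best of their
     witnesses beats itself. *)
  assert (Hloc : forall x : pt, exists dq : R * pt, 0 < fst dq /\ K (snd dq) /\
     forall y, near N x y (fst dq) -> K y -> phi y < phi (snd dq)).
  { intro x. destruct (classic (K x)) as [Kx|nKx].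
    - assert (exists q, K q /\ phi x < phi q) as [q [Kq Hq]].
      { apply NNPP; intro Hn. apply Hnomax. exists x; split; auto.
        intros q Kq. apply Rnot_lt_le. intro Hlt. apply Hn. now exists q. }
      destruct (Hcont x Kx (phi q - phi x)) as [d [Hd Hd']]; [lra|].
      exists (d, q); simpl; repeat split; auto.
      intros y Hy _. specialize (Hd' y Hy). apply Rabs_lt_between in Hd'. lra.
    - destruct (Hclosed x nKx) as [d [Hd Hd']].
      exists (d, x0); simpl; repeat split; auto.
      intros y Hy Ky. exfalso; exact (Hd' y Hy Ky). }
  destruct (choice _ Hloc) as [F HF].
  set (delta := fun t : Compactness.Tn N R =>
    mkposreal (fst (F (to_pt N t))) (proj1 (HF (to_pt N t)))).
  assert (Hbox : forall y, K y ->
    Compactness.bounded_n N (of_pt N (fun _ => -B)) (of_pt N (fun _ => B)) (of_pt N y)).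
  { intros y Ky; apply bounded_of_pt; intros i Hi.
    apply Rabs_le_between; exact (Hbound y Ky i Hi). }
  apply (compactness_list N (of_pt N (fun _ => -B)) (of_pt N (fun _ => B)) delta).
  intros [l Hl].
  destruct (Hl _ (Hbox x0 Kx0)) as [t0 [Ht0 _]].
  destruct (In_argmax l (fun t => phi (snd (F (to_pt N t)))) t0 Ht0) as [m [_ Hmax]].
  destruct (HF (to_pt N m)) as [_ [Kq _]].
  set (q := snd (F (to_pt N m))) in *.
  destruct (Hl _ (Hbox q Kq)) as [t [Ht [_ Hclose]]].
  destruct (HF (to_pt N t)) as [_ [_ Hbeat]].
  specialize (Hbeat q (near_of_close_n N _ q t Hclose) Kq).
  specialize (Hmax t Ht). simpl in Hmax. unfold q in *. lra.
Qed.

Lemma local_min_derivs (g g' : R -> R) t0 c eta : 0 < eta ->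
  (forall t, Rabs (t - t0) < eta -> derivable_pt_lim g t (g' t)) ->
  derivable_pt_lim g' t0 c ->
  (forall t, Rabs (t - t0) < eta -> g t0 <= g t) ->
  g' t0 = 0 /\ 0 <= c.
Proof.
  intros Heta Hg Hg' Hmin.
  assert (Hcrit : g' t0 = 0).
  { assert (Hd : derivable_pt_lim g t0 (g' t0))
      by (apply Hg; rewrite Rminus_diag, Rabs_R0; exact Heta).
    change (g' t0) with (derive_pt g t0 (exist _ (g' t0) Hd)).
    apply (deriv_minimum g (t0 - eta) (t0 + eta) t0); try lra.
    intros x H1 H2. apply Hmin, Rabs_def1; lra. }
  split; [exact Hcrit|].
  apply Rnot_lt_le; intro Hc.
  (* If [c = g'' t0] were negative, then [g' < 0] just right of [t0], and the mean
     value theorem makes [g] decrease there. *)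
  destruct (Hg' (- c / 2)) as [[delta Hdelta] Hdel]; [lra|]. simpl in Hdel.
  set (h := Rmin delta eta / 2).
  assert (0 < h /\ h < delta /\ h < eta) as (Hh & Hhd & Hhe).
  { pose proof (Rmin_pos delta eta Hdelta Heta).
    pose proof (Rmin_l delta eta). pose proof (Rmin_r delta eta). unfold h; lra. }
  destruct (MVT_cor2 g g' t0 (t0 + h)) as [xi [Hxi Hxib]]; [lra| |].
  { intros x Hx. apply Hg, Rabs_def1; lra. }
  assert (g' xi < 0).
  { specialize (Hdel (xi - t0)). replace (t0 + (xi - t0)) with xi in Hdel by ring.
    rewrite Hcrit in Hdel.
    assert (Hq : Rabs ((g' xi - 0) / (xi - t0) - c) < - c / 2)
      by (apply Hdel; [lra|apply Rabs_def1; lra]).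
    apply Rabs_def2 in Hq.
    destruct (Rlt_or_le (g' xi) 0) as [Hneg|Hnn]; [exact Hneg|].
    assert (0 <= (g' xi - 0) / (xi - t0)) by (apply Rdiv_le_0_compat; lra). lra. }
  assert (g t0 <= g (t0 + h)) by (apply Hmin, Rabs_def1; lra).
  nra.
Qed.

Lemma derivable_pt_lim_cont_eps f x l : derivable_pt_lim f x l -> forall eps, 0 < eps ->
  exists eta, 0 < eta /\ forall y, Rabs (y - x) < eta -> Rabs (f y - f x) < eps.
Proof.
  intros H eps Heps.
  destruct (derivable_continuous_pt f x (exist _ l H) eps Heps) as [eta [Heta H']].
  exists eta; split; [exact Heta|].
  intros y Hy. destruct (Req_dec y x) as [->|Hne].
  - rewrite Rminus_diag, Rabs_R0; lra.
  - apply H'. repeat split; auto.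
Qed.

Lemma derivable_pt_lim_upd2 (N : nat) (W : pt -> Prop) (Phi Pi Pj : pt -> R) (p : pt) i j
    (a b : R -> R) a' b' t :
  let q := upd (upd p i (a t)) j (b t) in
  i <> j -> open_set N W -> W q ->
  (forall x, W x -> derivable_pt_lim (fun s => Phi (upd x i s)) (x i) (Pi x)) ->
  (forall x, W x -> cont_at N Pi x) ->
  (forall x, W x -> derivable_pt_lim (fun s => Phi (upd x j s)) (x j) (Pj x)) ->
  derivable_pt_lim a t a' -> derivable_pt_lim b t b' ->
  derivable_pt_lim (fun s => Phi (upd (upd p i (a s)) j (b s))) t (Pi q * a' + Pj q * b').
Proof.
  intros q Hij HW Wq HPi HPic HPj Ha Hb.
  set (F := fun u v => Phi (upd (upd p i u) j v)).
  destruct (HW q Wq) as [d [Hd HdW]].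
  apply (derivable_pt_lim_comp_2d F a b t (Pi q) (Pj q) a' b'); auto.
  apply filterdiff_differentiable_pt_lim.
  eapply filterdiff_ext_lin.
  - apply (is_derive_filterdiff F (a t) (b t) (fun u v => Pi (upd (upd p i u) j v)) (Pj q)).
    + exists (mkposreal d Hd). intros [u v] [Hu Hv]. simpl in Hu, Hv.
      apply is_derive_Reals.
      assert (WQ : W (upd (upd p i u) j v)) by (apply HdW, near_upd2; auto).
      specialize (HPi _ WQ).
      rewrite upd_other, upd_same in HPi by auto.
      eapply derivable_pt_lim_ext; [|exact HPi].
      intro z. unfold F. simpl.
      rewrite (upd_comm p i j z v), (upd_comm p i j u v), upd_upd by auto.
      reflexivity.
    + apply is_derive_Reals. specialize (HPj q Wq).
      unfold q in HPj at 2. rewrite upd_same in HPj.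
      eapply derivable_pt_lim_ext; [|exact HPj].
      intro z. unfold F, q. now rewrite upd_upd.
    + apply (proj1 (continuity_2d_pt_filterlim
        (fun u v => Pi (upd (upd p i u) j v)) (a t) (b t))).
      intros eps. destruct (HPic q Wq eps (cond_pos eps)) as [e [He He']].
      exists (mkposreal e He). simpl. intros u v Hu Hv. apply He'. apply near_upd2; auto.
  - intros [u v]. reflexivity.
Qed.

(** * The cylinder and its stability operator *)

Lemma rad_sq n : (2 <= n)%nat -> rad n * rad n = 2 * (INR n - 1).
Proof. intros Hn. apply sqrt_sqrt. pose proof (INR_ge2 n Hn). lra. Qed.

Lemma rad_pos n : (2 <= n)%nat -> 0 < rad n.
Proof. intros Hn. apply sqrt_lt_R0. pose proof (INR_ge2 n Hn). lra. Qed.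

Lemma A2_half n : (2 <= n)%nat -> A2 n = / 2.
Proof.
  intros Hn. pose proof (INR_ge2 n Hn). unfold A2.
  replace (rad n ^ 2) with (rad n * rad n) by ring.
  rewrite rad_sq by exact Hn. field. lra.
Qed.

Lemma nu_height n x : nu n x n = 0.
Proof. unfold nu. now rewrite Nat.ltb_irrefl. Qed.

Lemma nu_lt n x i : (i < n)%nat -> nu n x i = x i / rad n.
Proof. intros H. unfold nu. apply Nat.ltb_lt in H. now rewrite H. Qed.

Lemma Sigma_upd_height n x t : Sigma n x -> Sigma n (upd x n t).
Proof. unfold Sigma. now rewrite rsum_sq_upd_ge. Qed.

Lemma Sigma_point_at_height n z : (2 <= n)%nat ->
  Sigma n (upd (upd (fun _ => 0) 0 (rad n)) n z).
Proof.
  intros Hn. apply Sigma_upd_height. unfold Sigma.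
  rewrite rsum_sq_upd, rsum_eq0 by (simpl; intros; ring || lia).
  rewrite <- rad_sq by exact Hn. ring.
Qed.

Lemma Lop_sub n U D1 D2 G E1 E2 p :
  Lop n (fun x => U x - G x) (fun i x => D1 i x - E1 i x)
    (fun i j x => D2 i j x - E2 i j x) p = Lop n U D1 D2 p - Lop n G E1 E2 p.
Proof.
  unfold Lop, lapSigma, xgradSigma.
  rewrite (rsum_ext (S n)
     (fun i => rsum (S n) (fun j => nu n p i * nu n p j * (D2 i j p - E2 i j p)))
     (fun i => rsum (S n) (fun j => nu n p i * nu n p j * D2 i j p)
             - rsum (S n) (fun j => nu n p i * nu n p j * E2 i j p))).
  2:{ intros i _. rewrite <- rsum_sub. apply rsum_ext; intros; ring. }
  rewrite (rsum_ext (S n) (fun i => nu n p i * (D1 i p - E1 i p))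
     (fun i => nu n p i * D1 i p - nu n p i * E1 i p)) by (intros; ring).
  rewrite (rsum_ext (S n) (fun i => p i * (D1 i p - E1 i p))
     (fun i => p i * D1 i p - p i * E1 i p)) by (intros; ring).
  rewrite !rsum_sub. ring.
Qed.

Lemma C2_on_sub N W U D1 D2 G E1 E2 : C2_on N W U D1 D2 -> C2_on N W G E1 E2 ->
  C2_on N W (fun x => U x - G x) (fun i x => D1 i x - E1 i x)
    (fun i j x => D2 i j x - E2 i j x).
Proof.
  intros (a1 & a2 & a3 & a4 & a5) (b1 & b2 & b3 & b4 & b5).
  refine (conj _ (conj _ (conj _ (conj _ _)))).
  - intros x Wx; apply cont_at_minus; [exact (a1 x Wx)|exact (b1 x Wx)].
  - intros i Hi x Wx; apply cont_at_minus; [exact (a2 i Hi x Wx)|exact (b2 i Hi x Wx)].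
  - intros i j Hi Hj x Wx.
    apply cont_at_minus; [exact (a3 i j Hi Hj x Wx)|exact (b3 i j Hi Hj x Wx)].
  - intros x i Wx Hi. apply (derivable_pt_lim_minus (fun t => U (upd x i t))); auto.
  - intros x i j Wx Hi Hj. apply (derivable_pt_lim_minus (fun t => D1 j (upd x i t))); auto.
Qed.

Definition C2_real (g g1 g2 : R -> R) : Prop :=
  (forall z, derivable_pt_lim g z (g1 z)) /\ (forall z, derivable_pt_lim g1 z (g2 z)) /\
  (forall z, continuity_pt g2 z).

Definition height (n : nat) (g : R -> R) : pt -> R := fun x => g (x n).

Definition height_D1 (n : nat) (g1 : R -> R) : nat -> pt -> R :=
  fun i x => if Nat.eq_dec i n then g1 (x n) else 0.

Definition height_D2 (n : nat) (g2 : R -> R) : nat -> nat -> pt -> R :=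
  fun i j x => if Nat.eq_dec i n then (if Nat.eq_dec j n then g2 (x n) else 0) else 0.

Lemma C2_real_scal s g g1 g2 : C2_real g g1 g2 ->
  C2_real (fun z => s * g z) (fun z => s * g1 z) (fun z => s * g2 z).
Proof.
  intros (H1 & H2 & H3). repeat split; intro z.
  - now apply derivable_pt_lim_scal.
  - now apply derivable_pt_lim_scal.
  - now apply continuity_pt_scal.
Qed.

Lemma cont_at_height N n h x : (n < N)%nat -> continuity_pt h (x n) ->
  cont_at N (height n h) x.
Proof. intros; apply (cont_at_comp N (fun y => y n) h x); auto. now apply cont_at_coord. Qed.

Lemma derivable_pt_lim_upd_const (F : pt -> R) x i c : (forall t, F (upd x i t) = c) ->
  derivable_pt_lim (fun t => F (upd x i t)) (x i) 0.
Proof.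
  intros H. eapply derivable_pt_lim_ext; [|apply (derivable_pt_lim_const c)].
  intro t; now rewrite H.
Qed.

Lemma C2_on_height n W g g1 g2 : C2_real g g1 g2 ->
  C2_on (S n) W (height n g) (height_D1 n g1) (height_D2 n g2).
Proof.
  intros (H1 & H2 & H3).
  assert (Hc : forall h, (forall z, continuity_pt h z) -> cont_on (S n) W (height n h))
    by (intros h Hh x _; apply cont_at_height; auto).
  assert (Hg1 : forall z, continuity_pt g1 z)
    by (intro z; exact (derivable_continuous_pt g1 z (exist _ _ (H2 z)))).
  assert (Hg : forall z, continuity_pt g z)
    by (intro z; exact (derivable_continuous_pt g z (exist _ _ (H1 z)))).
  unfold height_D1, height_D2. refine (conj _ (conj _ (conj _ (conj _ _)))).
  - now apply Hc.
  - intros i Hi. destruct (Nat.eq_dec i n); [now apply Hc|intros x _; apply cont_at_const].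
  - intros i j Hi Hj. destruct (Nat.eq_dec i n); [destruct (Nat.eq_dec j n)|];
      [now apply Hc| |]; intros x _; apply cont_at_const.
  - intros x i Wx Hi. destruct (Nat.eq_dec i n) as [->|Hne].
    + eapply derivable_pt_lim_ext; [|apply H1]. intro t; unfold height; now rewrite upd_same.
    + apply (derivable_pt_lim_upd_const (height n g) x i (g (x n))).
      intro t; unfold height. now rewrite upd_other.
  - intros x i j Wx Hi Hj. destruct (Nat.eq_dec j n) as [->|Hne].
    + destruct (Nat.eq_dec i n) as [->|Hne].
      * eapply derivable_pt_lim_ext; [|apply H2]. intro t; unfold height; now rewrite upd_same.
      * apply (derivable_pt_lim_upd_const (height n g1) x i (g1 (x n))).
        intro t; unfold height. now rewrite upd_other.
    + destruct (Nat.eq_dec i n); now apply (derivable_pt_lim_upd_const (fun _ => 0) x i 0).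
Qed.

(** Since [|A|^2 = 1/2], on functions of the height alone [L] is the ODE operator
    [g'' - z/2 g' + g]. *)
Definition Lheight (g g1 g2 : R -> R) (z : R) : R := g2 z - z / 2 * g1 z + g z.

Lemma Lop_height n g g1 g2 x : (2 <= n)%nat ->
  Lop n (height n g) (height_D1 n g1) (height_D2 n g2) x = Lheight g g1 g2 (x n).
Proof.
  intros Hn.
  assert (Hlap : rsum (S n) (fun i => height_D2 n g2 i i x) = g2 (x n)).
  { cbn [rsum]. rewrite rsum_eq0.
    - unfold height_D2. destruct (Nat.eq_dec n n); [ring|congruence].
    - intros i Hi. unfold height_D2. destruct (Nat.eq_dec i n); [lia|reflexivity]. }
  assert (Hnn : rsum (S n) (fun i => rsum (S n) (fun j =>
      nu n x i * nu n x j * height_D2 n g2 i j x)) = 0).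
  { apply rsum_eq0; intros i Hi; apply rsum_eq0; intros j Hj. unfold height_D2.
    destruct (Nat.eq_dec i n), (Nat.eq_dec j n); subst; rewrite ?nu_height; ring. }
  assert (Hn1 : rsum (S n) (fun i => nu n x i * height_D1 n g1 i x) = 0).
  { apply rsum_eq0; intros i Hi. unfold height_D1.
    destruct (Nat.eq_dec i n); subst; rewrite ?nu_height; ring. }
  assert (Hx1 : rsum (S n) (fun i => x i * height_D1 n g1 i x) = x n * g1 (x n)).
  { cbn [rsum]. rewrite rsum_eq0.
    - unfold height_D1. destruct (Nat.eq_dec n n); [ring|congruence].
    - intros i Hi. unfold height_D1. destruct (Nat.eq_dec i n); [lia|ring]. }
  unfold Lop, lapSigma, xgradSigma.
  rewrite Hlap, Hnn, Hn1, Hx1, A2_half by exact Hn.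
  unfold height, Lheight. field.
Qed.

(** * Second-order conditions at a zero minimum *)

(* The second derivative at [s = 0] of [s |-> V (rotation of p by angle s in the
   (x_i, x_j)-plane)], in terms of the ambient derivatives of [V] at [p]. *)
Definition rot_hessian (p : pt) (D1 : nat -> pt -> R) (D2 : nat -> nat -> pt -> R) i j : R :=
  p j ^ 2 * D2 i i p - p i * p j * (D2 i j p + D2 j i p) + p i ^ 2 * D2 j j p
  - p i * D1 i p - p j * D1 j p.

Lemma rot_hessian_sum n p D1 D2 :
  rsum n (fun i => rsum n (fun j => rot_hessian p D1 D2 i j)) =
  2 * (rsum n (fun k => p k ^ 2) * rsum n (fun i => D2 i i p)
       - rsum n (fun i => rsum n (fun j => p i * p j * D2 i j p))
       - INR n * rsum n (fun i => p i * D1 i p)).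
Proof.
  set (r2 := rsum n (fun k => p k ^ 2)).
  set (T := rsum n (fun i => D2 i i p)).
  set (P := rsum n (fun i => p i * D1 i p)).
  set (Q := rsum n (fun i => rsum n (fun j => p i * p j * D2 i j p))).
  set (Qi := fun i => rsum n (fun j => p j * D2 i j p)).
  set (Qi' := fun i => rsum n (fun j => p j * D2 j i p)).
  assert (Hrow : forall i, rsum n (fun j => rot_hessian p D1 D2 i j) =
     D2 i i p * r2 - p i * Qi i - p i * Qi' i + p i ^ 2 * T - INR n * (p i * D1 i p) - P).
  { intro i. rewrite (rsum_ext n _ (fun j => D2 i i p * p j ^ 2 - p i * (p j * D2 i j p)
        - p i * (p j * D2 j i p) + p i ^ 2 * D2 j j p - p i * D1 i p - p j * D1 j p))
      by (intros; unfold rot_hessian; ring).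
    repeat (rewrite rsum_sub || rewrite rsum_add). rewrite !rsum_scal, rsum_const.
    unfold r2, T, P, Qi, Qi'. ring. }
  assert (HQ : rsum n (fun i => p i * Qi i) = Q /\ rsum n (fun i => p i * Qi' i) = Q).
  { unfold Q, Qi, Qi'. split.
    - apply rsum_ext; intros i _. rewrite <- rsum_scal. apply rsum_ext; intros; ring.
    - rewrite rsum_swap. apply rsum_ext; intros i _. rewrite <- rsum_scal.
      apply rsum_ext; intros; ring. }
  rewrite (rsum_ext n _ _ (fun i _ => Hrow i)).
  repeat (rewrite rsum_sub || rewrite rsum_add). rewrite rsum_const.
  rewrite (proj1 HQ), (proj2 HQ), !rsum_scal.
  rewrite (rsum_ext n (fun i => D2 i i p * r2) (fun i => r2 * D2 i i p)) by (intros; ring).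
  rewrite (rsum_ext n (fun i => p i ^ 2 * T) (fun i => T * p i ^ 2)) by (intros; ring).
  rewrite !rsum_scal. fold T r2 P. ring.
Qed.

Lemma Lop_Sigma_zero n V D1 D2 p : (2 <= n)%nat -> Sigma n p -> V p = 0 -> D1 n p = 0 ->
  Lop n V D1 D2 p = D2 n n p +
    (rsum n (fun k => p k ^ 2) * rsum n (fun i => D2 i i p)
     - rsum n (fun i => rsum n (fun j => p i * p j * D2 i j p))
     - (INR n - 1) * rsum n (fun i => p i * D1 i p)) / rsum n (fun k => p k ^ 2).
Proof.
  intros Hn HS HV HD1.
  set (r2 := rsum n (fun k => p k ^ 2)) in *.
  pose proof (rad_sq n Hn) as Hr. pose proof (rad_pos n Hn) as Hrp.
  unfold Sigma in HS. fold r2 in HS.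
  assert (Hnu : forall i, (i < n)%nat -> nu n p i = p i / rad n) by (intros; now apply nu_lt).
  unfold Lop, lapSigma, xgradSigma. cbn [rsum]. rewrite !nu_height.
  assert (E1 : rsum n (fun i => rsum n (fun j => nu n p i * nu n p j * D2 i j p)
                  + nu n p i * 0 * D2 i n p)
      = rsum n (fun i => rsum n (fun j => p i * p j * D2 i j p)) / r2).
  { unfold Rdiv. rewrite Rmult_comm, <- rsum_scal. apply rsum_ext; intros i Hi.
    rewrite <- rsum_scal, Rmult_0_r, Rmult_0_l, Rplus_0_r. apply rsum_ext; intros j Hj.
    rewrite !Hnu by auto. rewrite HS, <- Hr. field. lra. }
  assert (E2 : rsum n (fun j => 0 * nu n p j * D2 n j p) = 0)
    by (apply rsum_eq0; intros; ring).
  assert (E3 : rsum n (fun i => nu n p i * D1 i p) = rsum n (fun i => p i * D1 i p) / rad n).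
  { unfold Rdiv. rewrite Rmult_comm, <- rsum_scal. apply rsum_ext; intros i Hi.
    rewrite Hnu by auto. field. lra. }
  assert (E4 : rsum n (fun i => p i * nu n p i) = rad n).
  { transitivity (/ rad n * r2).
    - unfold r2. rewrite <- rsum_scal. apply rsum_ext; intros i Hi.
      rewrite Hnu by auto. field; lra.
    - rewrite HS, <- Hr. field; lra. }
  rewrite E1, E2, E3, E4, HV, HD1. unfold Hmean.
  rewrite HS, <- Hr. field. lra.
Qed.

Lemma Lop_ge0_of_rot_hessian n V D1 D2 p : (2 <= n)%nat -> Sigma n p -> V p = 0 ->
  D1 n p = 0 -> 0 <= D2 n n p ->
  (forall i j, (i < n)%nat -> (j < n)%nat -> i <> j -> 0 <= rot_hessian p D1 D2 i j) ->
  0 <= Lop n V D1 D2 p.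
Proof.
  intros Hn HS HV HD1 HD2 HE.
  rewrite Lop_Sigma_zero by assumption.
  pose proof (INR_ge2 n Hn). pose proof (rot_hessian_sum n p D1 D2) as Hsum.
  (* Off-diagonal terms are nonnegative and the diagonal ones are [-2 p_i D1_i]. *)
  assert (Hdiag : rsum n (fun i => rot_hessian p D1 D2 i i)
                  <= rsum n (fun i => rsum n (fun j => rot_hessian p D1 D2 i j))).
  { apply rsum_le; intros i Hi. apply rsum_ge_term; [exact Hi|].
    intros j Hj Hji. apply HE; auto. }
  rewrite (rsum_ext n _ (fun i => -2 * (p i * D1 i p))), rsum_scal in Hdiag
    by (intros; unfold rot_hessian; ring).
  unfold Sigma in HS. rewrite HS in *.
  apply Rplus_le_le_0_compat; [exact HD2|].
  apply Rdiv_le_0_compat; lra.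
Qed.

Section ZeroMinimum.

Variables (n : nat) (W : pt -> Prop) (V : pt -> R).
Variables (D1 : nat -> pt -> R) (D2 : nat -> nat -> pt -> R) (p : pt) (d : R).
Hypothesis HW : open_set (S n) W.
Hypothesis HV : C2_on (S n) W V D1 D2.
Hypothesis Wp : W p.
Hypothesis Sp : Sigma n p.
Hypothesis Vp : V p = 0.
Hypothesis Hd : 0 < d.
Hypothesis Hmin : forall q, Sigma n q -> near (S n) p q d -> W q /\ 0 <= V q.

Lemma vertical_derivs_at_min : D1 n p = 0 /\ 0 <= D2 n n p.
Proof.
  destruct HV as (_ & _ & _ & Hd1 & Hd2).
  assert (Hnear : forall t, Rabs (t - p n) < d -> W (upd p n t) /\ 0 <= V (upd p n t))
    by (intros t Ht; apply Hmin; [now apply Sigma_upd_height|now apply near_upd]).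
  rewrite <- (upd_id p n) at 1.
  apply (local_min_derivs (fun t => V (upd p n t)) (fun t => D1 n (upd p n t)) (p n) _ d Hd).
  - intros t Ht.
    pose proof (Hd1 (upd p n t) n (proj1 (Hnear t Ht)) (Nat.lt_succ_diag_r n)) as H.
    rewrite upd_same in H. eapply derivable_pt_lim_ext; [|exact H].
    intro s; simpl. now rewrite upd_upd.
  - apply Hd2; auto.
  - intros t Ht. rewrite upd_id, Vp. apply (Hnear t Ht).
Qed.

Definition rot_x (i j : nat) (s : R) : R := p i * cos s - p j * sin s.
Definition rot_y (i j : nat) (s : R) : R := p j * cos s + p i * sin s.
Definition rotate (i j : nat) (s : R) : pt := upd (upd p i (rot_x i j s)) j (rot_y i j s).

Lemma derivable_rot_x i j s : derivable_pt_lim (rot_x i j) s (- rot_y i j s).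
Proof. apply is_derive_Reals. unfold rot_x, rot_y. auto_derive; auto. ring. Qed.

Lemma derivable_rot_y i j s : derivable_pt_lim (rot_y i j) s (rot_x i j s).
Proof. apply is_derive_Reals. unfold rot_x, rot_y. auto_derive; auto. ring. Qed.

Lemma rotate_0 i j : rotate i j 0 = p.
Proof.
  unfold rotate, rot_x, rot_y.
  rewrite cos_0, sin_0, !Rmult_1_r, !Rmult_0_r, Rminus_0_r, Rplus_0_r.
  now rewrite !upd_id.
Qed.

Lemma Sigma_rotate i j s : (i < n)%nat -> (j < n)%nat -> i <> j -> Sigma n (rotate i j s).
Proof.
  intros Hi Hj Hij. unfold Sigma, rotate, rot_x, rot_y.
  rewrite !rsum_sq_upd, upd_other by auto. unfold Sigma in Sp. rewrite Sp.
  pose proof (sin2_cos2 s) as Hsc. rewrite !Rsqr_pow2 in Hsc.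
  match goal with |- ?L = ?R =>
    replace L with (R + (p i ^ 2 + p j ^ 2) * (sin s ^ 2 + cos s ^ 2 - 1)) by ring end.
  rewrite Hsc; ring.
Qed.

Lemma rotate_near_min i j : (i < n)%nat -> (j < n)%nat -> i <> j ->
  exists eta, 0 < eta /\ forall s, Rabs (s - 0) < eta ->
    W (rotate i j s) /\ V (rotate i j 0) <= V (rotate i j s).
Proof.
  intros Hi Hj Hij.
  destruct (derivable_pt_lim_cont_eps _ 0 _ (derivable_rot_x i j 0) d Hd) as [e1 [He1 H1]].
  destruct (derivable_pt_lim_cont_eps _ 0 _ (derivable_rot_y i j 0) d Hd) as [e2 [He2 H2]].
  exists (Rmin e1 e2); split; [now apply Rmin_pos|].
  intros s Hs. rewrite rotate_0, Vp. apply Hmin; [now apply Sigma_rotate|].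
  rewrite <- (rotate_0 i j) at 1. apply near_upd2; auto.
  - apply H1. eapply Rlt_le_trans; [exact Hs|apply Rmin_l].
  - apply H2. eapply Rlt_le_trans; [exact Hs|apply Rmin_r].
Qed.

Section Rotation.

Variables i j : nat.
Hypotheses (Hi : (i < S n)%nat) (Hj : (j < S n)%nat) (Hij : i <> j).

Definition rotate_deriv (s : R) : R :=
  D1 i (rotate i j s) * - rot_y i j s + D1 j (rotate i j s) * rot_x i j s.

Lemma derivable_rotate s : W (rotate i j s) ->
  derivable_pt_lim (fun s => V (rotate i j s)) s (rotate_deriv s).
Proof.
  intros Ws. destruct HV as (_ & Hc1 & _ & Hd1 & _).
  exact (derivable_pt_lim_upd2 (S n) W V (D1 i) (D1 j) p i j _ _ _ _ s Hij HW Ws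
    (fun x Wx => Hd1 x i Wx Hi) (fun x Wx => Hc1 i Hi x Wx) (fun x Wx => Hd1 x j Wx Hj)
    (derivable_rot_x i j s) (derivable_rot_y i j s)).
Qed.

Lemma derivable_rotate_deriv_0 : derivable_pt_lim rotate_deriv 0 (rot_hessian p D1 D2 i j).
Proof.
  destruct HV as (_ & _ & Hc2 & _ & Hd2).
  assert (Wp0 : W (rotate i j 0)) by now rewrite rotate_0.
  pose proof (derivable_pt_lim_upd2 (S n) W (D1 i) (D2 i i) (D2 j i) p i j _ _ _ _ 0
    Hij HW Wp0 (fun x Wx => Hd2 x i i Wx Hi Hi) (fun x Wx => Hc2 i i Hi Hi x Wx)
    (fun x Wx => Hd2 x j i Wx Hj Hi) (derivable_rot_x i j 0) (derivable_rot_y i j 0)) as HDi.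
  pose proof (derivable_pt_lim_upd2 (S n) W (D1 j) (D2 i j) (D2 j j) p i j _ _ _ _ 0
    Hij HW Wp0 (fun x Wx => Hd2 x i j Wx Hi Hj) (fun x Wx => Hc2 i j Hi Hj x Wx)
    (fun x Wx => Hd2 x j j Wx Hj Hj) (derivable_rot_x i j 0) (derivable_rot_y i j 0)) as HDj.
  pose proof (derivable_pt_lim_plus _ _ 0 _ _
    (derivable_pt_lim_mult (fun s => D1 i (rotate i j s)) (fun s => - rot_y i j s) 0 _ _ HDi
       (derivable_pt_lim_opp _ 0 _ (derivable_rot_y i j 0)))
    (derivable_pt_lim_mult (fun s => D1 j (rotate i j s)) (rot_x i j) 0 _ _ HDj
       (derivable_rot_x i j 0))) as H.
  fold (rotate i j 0) in H. cbv beta in H. rewrite !rotate_0 in H.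
  unfold rot_x, rot_y in H. rewrite cos_0, sin_0 in H.
  match type of H with derivable_pt_lim _ _ ?l =>
    replace (rot_hessian p D1 D2 i j) with l by (unfold rot_hessian; ring) end.
  exact H.
Qed.

End Rotation.

Lemma rot_hessian_ge0_at_min i j : (i < n)%nat -> (j < n)%nat -> i <> j ->
  0 <= rot_hessian p D1 D2 i j.
Proof.
  intros Hi Hj Hij.
  assert (HiS : (i < S n)%nat) by lia. assert (HjS : (j < S n)%nat) by lia.
  destruct (rotate_near_min i j Hi Hj Hij) as [eta [Heta Hnear]].
  apply (local_min_derivs (fun s => V (rotate i j s)) (rotate_deriv i j) 0 _ eta Heta).
  - intros s Hs. apply derivable_rotate; auto. apply (Hnear s Hs).
  - now apply derivable_rotate_deriv_0.
  - intros s Hs. apply (Hnear s Hs).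
Qed.

Lemma Lop_ge0_at_zero_min : (2 <= n)%nat -> 0 <= Lop n V D1 D2 p.
Proof.
  intros Hn. destruct vertical_derivs_at_min as [Hv1 Hv2].
  apply Lop_ge0_of_rot_hessian; auto.
  intros; now apply rot_hessian_ge0_at_min.
Qed.

End ZeroMinimum.

Lemma Lop_le_at_touching n W U D1 D2 G E1 E2 p d : (2 <= n)%nat -> open_set (S n) W ->
  C2_on (S n) W U D1 D2 -> C2_on (S n) W G E1 E2 -> W p -> Sigma n p -> G p = U p -> 0 < d ->
  (forall q, Sigma n q -> near (S n) p q d -> W q /\ G q <= U q) ->
  Lop n G E1 E2 p <= Lop n U D1 D2 p.
Proof.
  intros Hn HW HU HG Wp Sp Hp Hd Hbelow.
  enough (0 <= Lop n (fun x => U x - G x) (fun i x => D1 i x - E1 i x)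
                  (fun i j x => D2 i j x - E2 i j x) p) by (rewrite Lop_sub in *; lra).
  apply (Lop_ge0_at_zero_min n W _ _ _ p d); auto.
  - now apply C2_on_sub.
  - lra.
  - intros q Sq Hq. destruct (Hbelow q Sq Hq). split; [assumption|lra].
Qed.

(** * Subsolutions of the height operator obstruct stability *)

Definition slab (n : nat) (al be : R) (x : pt) : Prop := Sigma n x /\ al <= x n <= be.

Lemma slab_compl_open n al be x : ~ slab n al be x ->
  exists d, 0 < d /\ forall y, near (S n) x y d -> ~ slab n al be y.
Proof.
  intros Hx. destruct (classic (Sigma n x)) as [Sx|nSx].
  - assert (Hout : x n < al \/ be < x n)
      by (apply NNPP; intro H; apply Hx; split; [exact Sx|lra]).
    destruct Hout as [Hlo|Hhi]; [exists (al - x n)|exists (x n - be)];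
      (split; [lra|]); intros y Hy [_ Hyn];
      specialize (Hy n (Nat.lt_succ_diag_r n)); apply Rabs_def2 in Hy; lra.
  - set (e := Rabs (rsum n (fun i => x i ^ 2) - 2 * (INR n - 1))).
    assert (He : 0 < e) by (apply Rabs_pos_lt; intro H; apply nSx; unfold Sigma; lra).
    destruct (cont_at_rsum_sq (S n) n x (Nat.le_succ_diag_r n) e He) as [d [Hd Hd']].
    exists d; split; [exact Hd|]. intros y Hy [Sy _]. specialize (Hd' y Hy).
    unfold Sigma in Sy. rewrite Sy, Rabs_minus_sym in Hd'. fold e in Hd'. lra.
Qed.

Lemma slab_bounded n al be x i : slab n al be x -> (i < S n)%nat ->
  Rabs (x i) <= 2 * (INR n - 1) + 1 + Rabs al + Rabs be.
Proof.
  intros [Sx Hxn] Hi. pose proof (Rabs_pos al). pose proof (Rabs_pos be).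
  destruct (Nat.eq_dec i n) as [->|Hne].
  - assert (0 <= 2 * (INR n - 1)).
    { unfold Sigma in Sx. rewrite <- Sx. rewrite <- (rsum_eq0 n (fun _ => 0)) by reflexivity.
      apply rsum_le; intros; apply pow2_ge_0. }
    pose proof (Rle_abs al). pose proof (Rle_abs (- al)). pose proof (Rle_abs be).
    rewrite Rabs_Ropp in *. apply Rabs_le; lra.
  - assert (Hsq : x i ^ 2 <= 2 * (INR n - 1))
      by (unfold Sigma in Sx; rewrite <- Sx; apply sq_le_rsum_sq; lia).
    apply Rabs_le; split; nra.
Qed.

Lemma Lheight_scal s g g1 g2 z :
  Lheight (fun z => s * g z) (fun z => s * g1 z) (fun z => s * g2 z) z = s * Lheight g g1 g2 z.
Proof. unfold Lheight. ring. Qed.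

Lemma slab_point_at_height n al be z : (2 <= n)%nat -> al <= z <= be ->
  exists x, slab n al be x /\ x n = z.
Proof.
  intros Hn Hz. exists (upd (upd (fun _ => 0) 0 (rad n)) n z).
  rewrite upd_same. split; [split|reflexivity]; [now apply Sigma_point_at_height|].
  now rewrite upd_same.
Qed.

Lemma slab_ratio_max n al be g U : (forall z, continuity_pt g z) ->
  (forall x, slab n al be x -> 0 < U x /\ cont_at (S n) U x) ->
  (exists x0, slab n al be x0) ->
  exists p, slab n al be p /\ forall q, slab n al be q -> g (q n) / U q <= g (p n) / U p.
Proof.
  intros Hg HU Hne.
  apply (closed_bounded_max (S n) (slab n al be) (fun x => height n g x / U x) _
    (slab_compl_open n al be) (fun x Kx i => slab_bounded n al be x i Kx)); [|exact Hne].
  intros x Kx. destruct (HU x Kx) as [Ux HUx].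
  apply cont_at_div; [apply cont_at_height; [lia|apply Hg]|exact HUx|lra].
Qed.

(* At a maximum point [p] of [g(x_n) / U] on the slab, the rescaled height function
   touches [U] from below, which the minimum principle forbids when [L g > 0]. *)
Lemma not_stable_of_subsolution n Omega al be g g1 g2 :
  (2 <= n)%nat -> C2_real g g1 g2 ->
  (forall x, slab n al be x -> Omega x) ->
  (exists z0, al <= z0 <= be /\ 0 < g z0) ->
  (forall z, al <= z <= be -> 0 < g z -> al < z < be /\ 0 < Lheight g g1 g2 z) ->
  ~ stable n Omega.
Proof.
  intros Hn Hg HK [z0 [Hz0 Hgz0]] Hsub (W & U & D1 & D2 & HW & HOW & HU & HL).
  assert (HKU : forall x, slab n al be x -> W x /\ Lop n U D1 D2 x = 0 /\ 0 < U x)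
    by (intros x Kx; split; [apply HOW|apply HL]; auto).
  destruct (slab_point_at_height n al be z0 Hn Hz0) as [x0 [Kx0 Hx0]].
  destruct (slab_ratio_max n al be g U) as [p [Kp Hmax]]; [| |now exists x0|].
  { destruct Hg as (Hg1 & _). intro z. exact (derivable_continuous_pt g _ (exist _ _ (Hg1 z))). }
  { intros x Kx. destruct (HKU x Kx) as (Wx & _ & Ux). split; [exact Ux|].
    destruct HU as (HUc & _). exact (HUc x Wx). }
  destruct (HKU p Kp) as (Wp & LUp & Up).
  set (M := g (p n) / U p).
  assert (HM : 0 < M).
  { destruct (HKU x0 Kx0) as (_ & _ & Ux0).
    enough (0 < g (x0 n) / U x0) by (pose proof (Hmax x0 Kx0); unfold M; lra).
    rewrite Hx0. now apply Rdiv_lt_0_compat. }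
  assert (HgM : g (p n) = M * U p) by (unfold M; field; lra).
  destruct Kp as [Sp Hpn].
  destruct (Hsub (p n) Hpn) as [[Hal Hbe] HLg]; [rewrite HgM; now apply Rmult_lt_0_compat|].
  destruct (HW p Wp) as [dW [HdW HdW']].
  set (del := Rmin dW (Rmin (p n - al) (be - p n))).
  assert (Hdel : 0 < del) by (apply Rmin_pos; [|apply Rmin_pos]; lra).
  assert (HdelW : del <= dW) by apply Rmin_l.
  assert (Hdel_al : del <= p n - al) by (eapply Rle_trans; [apply Rmin_r|apply Rmin_l]).
  assert (Hdel_be : del <= be - p n) by (eapply Rle_trans; [apply Rmin_r|apply Rmin_r]).
  pose proof (Lop_le_at_touching n W U D1 D2 (height n (fun z => / M * g z))
    (height_D1 n (fun z => / M * g1 z)) (height_D2 n (fun z => / M * g2 z)) p del Hn HW HU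
    (C2_on_height n W _ _ _ (C2_real_scal (/ M) g g1 g2 Hg)) Wp Sp) as Htouch.
  rewrite LUp, Lop_height, Lheight_scal in Htouch by exact Hn.
  enough (/ M * Lheight g g1 g2 (p n) <= 0)
    by (pose proof (Rinv_0_lt_compat M HM); nra).
  apply Htouch; [unfold height; rewrite HgM; field; lra|exact Hdel|].
  intros q Sq Hq.
  assert (Hqn : Rabs (q n - p n) < del) by (apply Hq; lia).
  apply Rabs_def2 in Hqn.
  assert (Kq : slab n al be q) by (split; [exact Sq|lra]).
  split; [apply HdW'; exact (near_mono _ _ _ _ _ HdelW Hq)|].
  destruct (HKU q Kq) as (_ & _ & Uq). unfold height.
  assert (Hgq : g (q n) <= M * U q).
  { replace (g (q n)) with (g (q n) / U q * U q) by (field; lra).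
    apply Rmult_le_compat_r; [lra|exact (Hmax q Kq)]. }
  replace (U q) with (/ M * (M * U q)) by (field; lra).
  apply Rmult_le_compat_l; [left; now apply Rinv_0_lt_compat|exact Hgq].
Qed.

Lemma stable_of_height_solution n Omega g g1 g2 : (2 <= n)%nat -> C2_real g g1 g2 ->
  (forall z, Lheight g g1 g2 z = 0) -> (forall x, Omega x -> 0 < g (x n)) ->
  stable n Omega.
Proof.
  intros Hn Hg Hsol Hpos.
  exists (fun _ => True), (height n g), (height_D1 n g1), (height_D2 n g2).
  split; [intros x _; exists 1; split; [lra|auto]|].
  split; [auto|]. split; [now apply C2_on_height|].
  intros x Ox. rewrite Lop_height by exact Hn. split; [apply Hsol|now apply Hpos].
Qed.

Ltac C2_real_poly :=
  split; [|split]; intro z;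
  [apply is_derive_Reals; auto_derive; auto; ring
  |apply is_derive_Reals; auto_derive; auto; ring
  |reg].

Lemma exists_large_sq c K s : 0 < s -> exists r, c < r /\ K < r * r * s.
Proof.
  intros Hs. set (r := Rabs c + Rabs K / s + 1). exists r.
  pose proof (Rle_abs c). pose proof (Rle_abs K). pose proof (Rabs_pos c).
  assert (0 <= Rabs K / s) by (apply Rdiv_le_0_compat; [apply Rabs_pos|lra]).
  assert (Hrs : Rabs K + s <= r * s).
  { replace (r * s) with (Rabs c * s + Rabs K / s * s + s) by (unfold r; ring).
    replace (Rabs K / s * s) with (Rabs K) by (field; lra).
    assert (0 <= Rabs c * s) by (apply Rmult_le_pos; lra). lra. }
  split; [unfold r; lra|].
  assert (1 <= r) by (unfold r; lra).
  assert (r * s <= r * (r * s)).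
  { rewrite <- (Rmult_1_l (r * s)) at 1.
    apply Rmult_le_compat_r; [apply Rmult_le_pos|]; lra. }
  rewrite Rmult_assoc. lra.
Qed.

(* Below [sqrt 2] the upper region contains a slab [b <= x_n <= r] carrying the strict
   subsolution [(z^2 - b^2)(r^2 - z^2)]. *)
Lemma region_up_unstable n C : (2 <= n)%nat -> 0 < C -> C < sqrt 2 ->
  ~ stable n (region_up n C).
Proof.
  intros Hn HC HCs.
  pose proof (sqrt_sqrt 2 ltac:(lra)) as H2.
  set (b := (C + sqrt 2) / 2).
  assert (Hb : C < b /\ b * b < 2) by (split; unfold b; nra).
  destruct (exists_large_sq b 36 (2 - b * b)) as [r [Hbr Hr]]; [lra|].
  apply (not_stable_of_subsolution n _ b r (fun z => (z * z - b * b) * (r * r - z * z))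
    (fun z => 2 * z * (r * r + b * b) - 4 * (z * z * z))
    (fun z => 2 * (r * r + b * b) - 12 * (z * z))); [exact Hn|C2_real_poly| | |].
  - intros x [Sx Hx]. split; [exact Sx|lra].
  - exists ((b + r) / 2). split; [lra|]. apply Rmult_lt_0_compat; nra.
  - intros z Hz Hg. split.
    + split; apply Rnot_le_lt; intro Hle;
        [replace z with b in Hg by lra|replace z with r in Hg by lra]; nra.
    + assert (Hid : Lheight (fun z => (z * z - b * b) * (r * r - z * z))
          (fun z => 2 * z * (r * r + b * b) - 4 * (z * z * z))
          (fun z => 2 * (r * r + b * b) - 12 * (z * z)) z
        = (z * z - 6) ^ 2 + (r * r * (2 - b * b) - 36) + 2 * (b * b))
        by (unfold Lheight; field).
      rewrite Hid. pose proof (pow2_ge_0 (z * z - 6)). nra.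
Qed.

(* Above [sqrt 2] the middle region contains the slab [|x_n| <= a] carrying the strict
   subsolution [a^2 - z^2], since [L (a^2 - z^2) = a^2 - 2 > 0]. *)
Lemma region_mid_unstable n C : (2 <= n)%nat -> sqrt 2 < C -> ~ stable n (region_mid n C).
Proof.
  intros Hn HCs.
  pose proof (sqrt_sqrt 2 ltac:(lra)) as H2. pose proof (sqrt_pos 2).
  set (a := (C + sqrt 2) / 2).
  assert (Ha : 0 < a /\ a < C /\ 2 < a * a) by (unfold a; repeat split; nra).
  apply (not_stable_of_subsolution n _ (- a) a (fun z => a * a - z * z)
    (fun z => - (2 * z)) (fun _ => -2)); [exact Hn|C2_real_poly| | |].
  - intros x [Sx Hx]. split; [exact Sx|apply Rabs_def1; lra].
  - exists 0. split; [lra|nra].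
  - intros z Hz Hg. split; [split; nra|]. unfold Lheight. nra.
Qed.

Lemma regions_stable_sqrt2 n : (2 <= n)%nat ->
  stable n (region_up n (sqrt 2)) /\ stable n (region_mid n (sqrt 2)) /\
  stable n (region_low n (sqrt 2)).
Proof.
  intros Hn. pose proof (sqrt_sqrt 2 ltac:(lra)) as H2. pose proof (sqrt_pos 2).
  (* [z^2 - 2] solves [L g = 0] and changes sign exactly at [x_n = +-sqrt 2]. *)
  assert (Hout : forall Omega, (forall x, Omega x -> 2 < x n * x n) -> stable n Omega).
  { intros Omega HO. apply (stable_of_height_solution n _ (fun z => z * z - 2)
      (fun z => 2 * z) (fun _ => 2)); [exact Hn|C2_real_poly| |].
    - intro z. unfold Lheight. field.
    - intros x Ox. pose proof (HO x Ox). lra. }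
  split; [|split]; [apply Hout; intros x [_ Hx]; nra| |apply Hout; intros x [_ Hx]; nra].
  apply (stable_of_height_solution n _ (fun z => 2 - z * z) (fun z => - (2 * z))
    (fun _ => -2)); [exact Hn|C2_real_poly| |].
  - intro z. unfold Lheight. field.
  - intros x [_ Hx]. apply Rabs_def2 in Hx. nra.
Qed.

Theorem corollary4p10 (n : nat) (hn : (2 <= n)%nat) :
  forall C : R, 0 < C ->
    ((stable n (region_up n C) /\ stable n (region_mid n C) /\
      stable n (region_low n C)) <-> C = sqrt 2).
Proof.
  intros C HC. split.
  - intros (Hup & Hmid & _).
    destruct (Rtotal_order C (sqrt 2)) as [Hlt|[Heq|Hgt]]; [|exact Heq|]; exfalso.
    + exact (region_up_unstable n C hn HC Hlt Hup).
    + exact (region_mid_unstable n C hn Hgt Hmid).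
  - intros ->. now apply regions_stable_sqrt2.
Qed.
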